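(* For any $(n,t_e,\lambda)$-full-access setting satisfying $2n-t_e\le 2^{\lambda}$, there is a P-PMT family (obtained by repeating a one-round polynomial ramp-secret-sharing-based protocol $q$ times, $q\in\mathbb N$ arbitrary) with P-secrecy rate $1-\frac{t_e}{n}$.
   Context: Multipath setting: an $(n,t_a,t_b,t_e,\lambda)$-multipath setting ($0\le t_a,t_b,t_e\le n$) has a sender Alice, a receiver Bob and a passive, computationally unbounded eavesdropper Eve, connected by $n$ disjoint paths; Alice and Bob share no key. At any time Alice, Bob and Eve access at most $t_a,t_b,t_e$ paths respectively. Time is divided into intervals, each corresponding to sending $\lambda$ consecutive bits over a path; at the start of each interval every party (Eve included, adaptively) chooses its accessed paths and keeps them for the whole interval. Anything sent over a path is seen by all parties accessing that path in that interval; Eve's view is everything sent over her accessed paths. The case $t_a=t_b=n$ is called the $(n,t_e,\lambda)$-full-access setting. PMT protocol: a $(k,c,\delta,\epsilon)$-PMT protocol transmits any $S\in\{0,1\}^k$ from Alice to Bob with $c$ communicated bits, Bob outputting $\hat S$, with $\Pr(\hat S\neq s)\le\delta$ for all $s$ and $SD(View_E(s_1),View_E(s_2))\le\epsilon$ for all $s_1,s_2$ ($View_E(s)$ Eve's view when $s$ is sent, any Eve strategy; $SD(X,Y)=\frac12\sum_x|\Pr(X=x)-\Pr(Y=x)|$). P-PMT family: a sequence $(\Pi_i)_{i\in\mathbb N}$ of $(k_i,c_i,0,0)$-PMT protocols with $k_{i+1}>k_i$; its P-secrecy rate is $\inf_i k_i/c_i$. *)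

(* Model of PMT protocols in the (n, t_e, lambda)-full-access
   multipath setting (t_a = t_b = n). *)
From HB Require Import structures.
From mathcomp Require Import all_boot all_order all_algebra.
Set Implicit Arguments. Unset Strict Implicit. Unset Printing Implicit Defensive.
Import Order.TTheory GRing.Theory Num.Theory.
Local Open Scope ring_scope.

(* lambda bits sent over one path during one interval *)
Definition block (lambda : nat) : finType := lambda.-tuple bool.

(* the full transcript: for each interval j < r and each path i < n,
   the lambda-bit block sent over path i during interval j *)
Definition transcript (n lambda r : nat) : finType :=
  {ffun 'I_r -> {ffun 'I_n -> block lambda}}.

(* what Eve observes in one interval: Some b on an accessed path, None otherwise *)
Definition obs (n lambda : nat) : finType := {ffun 'I_n -> option (block lambda)}.
Definition eview (n lambda r : nat) : finType := {ffun 'I_r -> obs n lambda}.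

(* A protocol for the full-access setting with n paths and interval length lambda:
   r intervals, Alice's randomness uniform over the finite type p_Omega,
   Alice sends over all n paths in every interval; Bob decodes the transcript. *)
Record protocol (n lambda : nat) := Protocol {
  p_k : nat;
  p_r : nat;
  p_Omega : finType;
  p_enc : p_k.-tuple bool -> p_Omega -> transcript n lambda p_r;
  p_dec : transcript n lambda p_r -> p_k.-tuple bool }.

Definition p_c n lambda (P : protocol n lambda) : nat := (p_r P * n * lambda)%N.

(* An adaptive (possibly randomized, coins uniform over e_Theta) eavesdropper
   accessing at most t_e paths per interval; at the start of interval j she
   chooses her paths as a function of her coins and of her view of the
   previous intervals (later intervals are blanked out, see view_upto). *)
Record eve (n lambda r t_e : nat) := Eve {
  e_Theta : finType;
  e_choose : e_Theta -> 'I_r -> eview n lambda r -> {set 'I_n};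
  e_bound : forall th j v, (#|e_choose th j v| <= t_e)%N }.

Definition observe n lambda (A : {set 'I_n}) (x : {ffun 'I_n -> block lambda})
  : obs n lambda := [ffun i => if i \in A then Some (x i) else None].

Definition empty_view n lambda r : eview n lambda r := [ffun _ => [ffun _ => None]].

Fixpoint view_upto n lambda r (Th : finType)
    (ch : Th -> 'I_r -> eview n lambda r -> {set 'I_n}) (th : Th)
    (tr : transcript n lambda r) (m : nat) : eview n lambda r :=
  match m with
  | 0 => empty_view n lambda r
  | m'.+1 =>
      let v := view_upto ch th tr m' in
      [ffun j : 'I_r => if (j == m' :> nat) then observe (ch th j v) (tr j) else v j]
  end.

Definition eve_view n lambda r t_e (E : eve n lambda r t_e) (th : e_Theta E)
  (tr : transcript n lambda r) : eview n lambda r :=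
  view_upto (@e_choose _ _ _ _ E) th tr r.

Definition view_dist n lambda t_e (P : protocol n lambda) (E : eve n lambda (p_r P) t_e)
  (s : (p_k P).-tuple bool) (v : eview n lambda (p_r P)) : rat :=
  (#|[pred x : (p_Omega P * e_Theta E)%type | eve_view x.2 (p_enc s x.1) == v]|%:R
     / #|{: (p_Omega P * e_Theta E)%type}|%:R).

Definition SD (T : finType) (X Y : T -> rat) : rat :=
  2^-1 * \sum_(x : T) `|X x - Y x|.

Definition err_prob n lambda (P : protocol n lambda) (s : (p_k P).-tuple bool) : rat :=
  #|[pred w : p_Omega P | @p_dec _ _ P (p_enc s w) != s]|%:R / #|{: p_Omega P}|%:R.

Definition is_PMT n lambda t_e (P : protocol n lambda) (delta eps : rat) : Prop :=
  (0 < #|{: p_Omega P}|)%N /\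
  (forall s : (p_k P).-tuple bool, @err_prob _ _ P s <= delta) /\
  (forall (E : eve n lambda (p_r P) t_e) (s1 s2 : (p_k P).-tuple bool),
      SD (view_dist E s1) (view_dist E s2) <= eps).

Definition P_PMT_family n lambda t_e (F : nat -> protocol n lambda) : Prop :=
  (forall i, is_PMT t_e (F i) 0 0) /\ (forall i, (p_k (F i) < p_k (F i.+1))%N).

Definition ratio n lambda (P : protocol n lambda) : rat := (p_k P)%:R / (p_c P)%:R.

(* the P-secrecy rate inf_i k_i / c_i equals rho (greatest lower bound) *)
Definition P_secrecy_rate_is n lambda (F : nat -> protocol n lambda) (rho : rat) : Prop :=
  (forall i, rho <= ratio (F i)) /\
  (forall e : rat, 0 < e -> exists i, ratio (F i) < rho + e).

From Pilot Require Import Defs.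
From mathcomp Require Import all_boot all_order all_algebra all_field.
From mathcomp Require Import zify ring.
Set Implicit Arguments. Unset Strict Implicit. Unset Printing Implicit Defensive.
Import Order.TTheory GRing.Theory Num.Theory.
Local Open Scope ring_scope.

(* In each of q rounds Alice hides a block s of n - t_e field elements of
   GF(2^lambda) as the high coefficients of a polynomial w + s X^t_e whose
   t_e low coefficients w are uniformly random, and sends its values at n
   distinct points (there are enough, as n <= 2n - t_e <= 2^lambda), one per
   path.  The polynomial has size at most n, so Bob
   recovers it, and hence s, by interpolation.  Eve sees at most t_e values
   per round; adding to w the remainder of (s1 - s2) X^t_e modulo the
   polynomial vanishing at her chosen points turns a run sending s1 into a run
   sending s2 with the same view.  This shift is a bijection on Alice's coins,
   so the views have the same distribution, and the rate is
   q lambda (n - t_e) / (q n lambda) = 1 - t_e / n. *)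

Lemma poly_eq_on_uniq (F : idomainType) (p q : {poly F}) (rs : seq F) :
  uniq rs -> (size p <= size rs)%N -> (size q <= size rs)%N ->
  {in rs, forall x, p.[x] = q.[x]} -> p = q.
Proof.
move=> rs_uniq sp sq pq; apply/eqP; rewrite -subr_eq0; apply/eqP.
apply: roots_geq_poly_eq0 rs_uniq _.
  by apply/allP => x /pq; rewrite /root hornerD hornerN => ->; rewrite subrr.
by rewrite (leq_trans (size_polyD _ _)) // size_polyN geq_max sp sq.
Qed.

Section RampSharing.
Variables (F : fieldType) (t m n : nat) (a : 'I_n -> F).

Definition ramp_poly (w : {poly_t F}) (s : {poly_m F}) : {poly F} :=
  (w : {poly F}) + (s : {poly F}) * 'X^t.

Lemma size_ramp_poly w s : (size (ramp_poly w s) <= t + m)%N.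
Proof.
apply: leq_trans (size_polyD _ _) _; rewrite geq_max.
rewrite (leq_trans (size_npoly w)) ?leq_addr //=.
have [->|s_neq0] := eqVneq (s : {poly F}) 0; first by rewrite mul0r size_poly0.
by rewrite size_mulXn // leq_add2l size_npoly.
Qed.

Lemma drop_ramp_poly w s : drop_poly t (ramp_poly w s) = s :> {poly F}.
Proof. exact/drop_polyDMXn/size_npoly. Qed.

Lemma ramp_secret_inj w w' s s' : (t + m <= n)%N -> injective a ->
  (forall i, (ramp_poly w s).[a i] = (ramp_poly w' s').[a i]) -> s = s'.
Proof.
move=> tm_le_n a_inj eq_a; apply: val_inj => /=.
rewrite -(drop_ramp_poly w) -(drop_ramp_poly w').
have size_rs : size [seq a i | i <- enum 'I_n] = n by rewrite size_map size_enum_ord.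
congr drop_poly; apply: (poly_eq_on_uniq (rs := [seq a i | i <- enum 'I_n])).
- by rewrite map_inj_uniq ?enum_uniq.
- by rewrite size_rs (leq_trans (size_ramp_poly _ _)).
- by rewrite size_rs (leq_trans (size_ramp_poly _ _)).
- by move=> _ /mapP[i _ ->].
Qed.

Definition vanishing_poly (A : {set 'I_n}) : {poly F} :=
  \prod_(x <- [seq a i | i in A]) ('X - x%:P).

Lemma size_vanishing_poly (A : {set 'I_n}) : size (vanishing_poly A) = #|A|.+1.
Proof. by rewrite size_prod_XsubC size_map -cardE. Qed.

Lemma root_vanishing_poly (A : {set 'I_n}) i :
  i \in A -> root (vanishing_poly A) (a i).
Proof. by move=> iA; rewrite root_prod_XsubC map_f ?mem_enum. Qed.

(* (s1 - s2) X^t reduced modulo the vanishing polynomial of A: it agrees with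
   (s1 - s2) X^t on A and has size at most #|A|, so it is a legitimate random
   part once #|A| <= t. *)
Definition ramp_shift (A : {set 'I_n}) (s1 s2 : {poly_m F}) : {poly_t F} :=
  npolyp t (((polyn s1 - polyn s2) * 'X^t) %% vanishing_poly A).

Lemma horner_ramp_shift (A : {set 'I_n}) s1 s2 (w : {poly_t F}) i :
  (#|A| <= t)%N -> i \in A ->
  (ramp_poly (w + ramp_shift A s1 s2) s2).[a i] = (ramp_poly w s1).[a i].
Proof.
move=> At iA; set d := (polyn s1 - polyn s2) * 'X^t.
have Q0 : vanishing_poly A != 0 by rewrite -size_poly_eq0 size_vanishing_poly.
have size_mod : (size (d %% vanishing_poly A)%R <= t)%N.
  by rewrite (leq_trans _ At) // -ltnS -(size_vanishing_poly A) ltn_modp.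
have shift_d : (ramp_shift A s1 s2 : {poly F}).[a i] = d.[a i].
  rewrite npolypK -/d // {2}(divp_eq d (vanishing_poly A)) hornerD hornerM.
  by rewrite (eqP (root_vanishing_poly iA)) mulr0 add0r.
rewrite /ramp_poly !hornerD !hornerM [\val (ramp_shift _ _ _)]/= shift_d /d.
rewrite hornerM hornerD hornerN; ring.
Qed.

End RampSharing.

Section EveView.
Variables (n lambda r : nat).

Definition view_before (m : nat) (v : eview n lambda r) : eview n lambda r :=
  [ffun j : 'I_r => if (j < m)%N then v j else [ffun _ => None]].

Variables (Th : finType) (choose : Th -> 'I_r -> eview n lambda r -> {set 'I_n}).

Lemma view_upto_ge th tr m (j : 'I_r) :
  (m <= j)%N -> view_upto choose th tr m j = [ffun _ => None].
Proof.
elim: m => [|m IH] m_le_j /=; first by rewrite ffunE.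
rewrite ffunE ifN; first exact/IH/ltnW.
by rewrite neq_ltn m_le_j orbT.
Qed.

Lemma view_uptoP th tr m v :
  view_upto choose th tr m = view_before m v <->
  (forall j : 'I_r, (j < m)%N ->
     observe (choose th j (view_before j v)) (tr j) = v j).
Proof.
elim: m => [|m IH] /=.
  by split=> // _; apply/ffunP => j; rewrite !ffunE.
split=> [view_eq | obs_eq].
- have view_eq_m : view_upto choose th tr m = view_before m v.
    apply/ffunP => j; rewrite [RHS]ffunE; case: ltnP => [j_lt_m | m_le_j].
    + move/ffunP: view_eq => /(_ j).
      rewrite !ffunE ifN; last by rewrite neq_ltn j_lt_m.
      by rewrite ltnS ltnW.
    + by rewrite view_upto_ge.
  move=> j; rewrite ltnS leq_eqVlt => /orP[/eqP j_eq_m | j_lt_m].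
  + move/ffunP: view_eq => /(_ j); rewrite !ffunE j_eq_m eqxx ltnSn.
    by rewrite -view_eq_m.
  + exact: (proj1 IH view_eq_m).
- have view_eq_m : view_upto choose th tr m = view_before m v.
    by apply/IH => j j_lt_m; apply/obs_eq/ltnW.
  apply/ffunP => j; rewrite !ffunE view_eq_m.
  have [j_eq_m | j_ne_m] := eqVneq (j : nat) m.
  + by have := obs_eq j; rewrite j_eq_m ltnSn => /(_ isT) <-.
  + by rewrite ffunE ltnS [(j <= m)%N]leq_eqVlt (negbTE j_ne_m).
Qed.

End EveView.

Lemma eve_viewP n lambda r t_e (E : eve n lambda r t_e) th tr v :
  eve_view (E:=E) th tr = v <->
  (forall j : 'I_r, observe (e_choose (e:=E) th j (view_before j v)) (tr j) = v j).
Proof.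
have full_v : view_before r v = v by apply/ffunP => j; rewrite ffunE ltn_ord.
rewrite /eve_view -{1}full_v view_uptoP.
by split=> obs_eq j => [|_]; apply: obs_eq.
Qed.

Lemma eq_eve_view n lambda r t_e (E : eve n lambda r t_e) th v
    (tr1 tr2 : transcript n lambda r) :
  (forall j : 'I_r, observe (e_choose (e:=E) th j (view_before j v)) (tr1 j) =
                    observe (e_choose (e:=E) th j (view_before j v)) (tr2 j)) ->
  (eve_view (E:=E) th tr1 == v) = (eve_view (E:=E) th tr2 == v).
Proof.
move=> obs_eq; apply/eqP/eqP => /eve_viewP view_eq; apply/eve_viewP => j.
  by rewrite -obs_eq.
by rewrite obs_eq.
Qed.

Section RampProtocol.
Variables (F : finFieldType) (n t m lambda q : nat).
Variables (g : F -> block lambda) (a : 'I_n -> F).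

Definition ramp_encode (s : {ffun 'I_q -> {poly_m F}}) (w : {ffun 'I_q -> {poly_t F}})
  : transcript n lambda q :=
  [ffun j => [ffun i => g (ramp_poly (w j) (s j)).[a i]]].

Definition ramp_decode (s0 : {ffun 'I_q -> {poly_m F}}) (tr : transcript n lambda q)
  : {ffun 'I_q -> {poly_m F}} :=
  if [pick x | ramp_encode x.1 x.2 == tr] is Some x then x.1 else s0.

Lemma ramp_encodeK s0 s w : (t + m <= n)%N -> injective a -> injective g ->
  ramp_decode s0 (ramp_encode s w) = s.
Proof.
move=> tm_le_n a_inj g_inj; rewrite /ramp_decode.
case: pickP => [[s' w'] /eqP /= enc_eq|].
  apply/ffunP => j; apply: (@ramp_secret_inj _ t m n a (w' j) (w j)) => // i.
  by apply: g_inj; move/ffunP/(_ j)/ffunP/(_ i): enc_eq; rewrite !ffunE.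
by move=> /(_ (s, w)); rewrite /= eqxx.
Qed.

Variable E : eve n lambda q t.

(* Eve's choice in round j depends only on her view of the earlier rounds, so
   the shift is chosen against the target view v truncated before round j. *)
Definition ramp_shift_for (v : eview n lambda q) (s1 s2 : {ffun 'I_q -> {poly_m F}})
  (th : e_Theta E) : {ffun 'I_q -> {poly_t F}} :=
  [ffun j => ramp_shift t a (e_choose th j (view_before j v)) (s1 j) (s2 j)].

Lemma eve_view_ramp_shift v s1 s2 th w :
  (eve_view th (ramp_encode s2 (w + ramp_shift_for v s1 s2 th)) == v) =
  (eve_view th (ramp_encode s1 w) == v).
Proof.
apply: eq_eve_view => j; apply/ffunP => i; rewrite !ffunE.
by case: ifP => // iA; rewrite horner_ramp_shift ?e_bound.
Qed.

Lemma card_ramp_view s1 s2 v :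
  #|[pred x : {ffun 'I_q -> {poly_t F}} * e_Theta E |
     eve_view x.2 (ramp_encode s1 x.1) == v]| =
  #|[pred x : {ffun 'I_q -> {poly_t F}} * e_Theta E |
     eve_view x.2 (ramp_encode s2 x.1) == v]|.
Proof.
pose shift (x : {ffun 'I_q -> {poly_t F}} * e_Theta E) :=
  (x.1 + ramp_shift_for v s1 s2 x.2, x.2).
have shift_inj : injective shift.
  move=> [w th] [w' th'] [/= w_eq th_eq]; subst th'.
  by rewrite (addIr _ w_eq).
pose S2 := [set x : {ffun 'I_q -> {poly_t F}} * e_Theta E |
              eve_view x.2 (ramp_encode s2 x.1) == v].
transitivity #|shift @^-1: S2|.
  by apply: eq_card => x; rewrite !inE /= eve_view_ramp_shift.
by rewrite card_preimset //; apply: eq_card => x; rewrite inE.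
Qed.

End RampProtocol.

Definition fin_bij (T U : finType) (eq_card_TU : #|T| = #|U|) (x : T) : U :=
  enum_val (cast_ord eq_card_TU (enum_rank x)).

Lemma fin_bijK (T U : finType) (eq_card_TU : #|T| = #|U|) :
  cancel (fin_bij eq_card_TU) (fin_bij (esym eq_card_TU)).
Proof. by move=> x; rewrite /fin_bij enum_valK cast_ordK enum_rankK. Qed.

Section RampFamily.
Variables (F : finFieldType) (lambda : nat).
Hypothesis card_F : #|F| = (2 ^ lambda)%N.

Lemma card_field_block : #|F| = #|block lambda|.
Proof. by rewrite card_F card_tuple card_bool. Qed.

Lemma card_ramp_secrets q m :
  #|{: (q * lambda * m).-tuple bool}| = #|{: {ffun 'I_q -> {poly_m F}}}|.
Proof.
rewrite card_tuple card_bool card_ffun card_npoly card_ord card_F -!expnM.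
congr (_ ^ _)%N; lia.
Qed.

Variables (n t : nat) (a : 'I_n -> F).

Definition ramp_protocol (q : nat) : protocol n lambda :=
  @Protocol n lambda (q * lambda * (n - t)) q {ffun 'I_q -> {poly_t F}}
    (fun s => ramp_encode (fin_bij card_field_block) a
                (fin_bij (card_ramp_secrets q (n - t)) s))
    (fun tr => fin_bij (esym (card_ramp_secrets q (n - t)))
                 (ramp_decode t (fin_bij card_field_block) a 0 tr)).

Lemma ramp_protocol_PMT q : (t <= n)%N -> injective a ->
  is_PMT t (ramp_protocol q) 0 0.
Proof.
move=> t_le_n a_inj; split; [|split].
- by apply/card_gt0P; exists 0.
- move=> s; rewrite /err_prob (eq_card0 (_ : _ =i pred0)) ?mul0r // => w.
  rewrite inE /= ramp_encodeK ?subnKC ?fin_bijK ?eqxx //.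
  exact: can_inj (fin_bijK card_field_block).
- move=> E s1 s2; rewrite /SD big1 ?mulr0 // => v _.
  rewrite /view_dist (card_ramp_view _ _ _ _ (fin_bij (card_ramp_secrets q (n - t)) s2)).
  by rewrite subrr normr0.
Qed.

Lemma ratio_ramp_protocol q : (t < n)%N -> (0 < lambda)%N -> (0 < q)%N ->
  Pilot.Defs.ratio (ramp_protocol q) = 1 - (t%:R / n%:R : rat).
Proof.
move=> t_lt_n lambda_gt0 q_gt0; rewrite /Pilot.Defs.ratio /p_c /=.
have n_neq0 : (n%:R : rat) != 0 by rewrite pnatr_eq0 -lt0n (leq_ltn_trans _ t_lt_n).
have lambda_neq0 : (lambda%:R : rat) != 0 by rewrite pnatr_eq0 -lt0n.
have q_neq0 : (q%:R : rat) != 0 by rewrite pnatr_eq0 -lt0n.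
rewrite !natrM natrB ?(ltnW t_lt_n) //.
by field; rewrite n_neq0 lambda_neq0 q_neq0.
Qed.

End RampFamily.

Theorem proposition1 (n t_e lambda : nat) :
  (t_e < n)%N -> (2 * n - t_e <= 2 ^ lambda)%N ->
  exists F : nat -> protocol n lambda,
    P_PMT_family t_e F /\ P_secrecy_rate_is F (1 - (t_e%:R / n%:R : rat)).
Proof.
move=> t_lt_n field_large.
have n_le_2l : (n <= 2 ^ lambda)%N by lia.
have lambda_gt0 : (0 < lambda)%N.
  by rewrite lt0n; apply/eqP => lambda0; move: field_large; rewrite lambda0; lia.
have [K _ card_K] := pPrimePowerField (isT : prime 2) lambda_gt0.
have n_le_K : (n <= #|K|)%N by rewrite card_K.
pose a (i : 'I_n) : K := enum_val (widen_ord n_le_K i).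
have a_inj : injective a.
  by move=> i j /enum_val_inj /(congr1 val) /= /val_inj.
exists (fun i => ramp_protocol card_K t_e a i.+1); split; split.
- move=> i; exact: ramp_protocol_PMT (ltnW t_lt_n) a_inj.
- by move=> i /=; rewrite !ltn_pmul2r ?subn_gt0.
- by move=> i; rewrite ratio_ramp_protocol.
- by move=> e e_gt0; exists 0%N; rewrite ratio_ramp_protocol // ltrDl.
Qed.
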